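(* The functions \[ \Phi(x)=x\,\frac{\mathrm{Ai}'(a_1+x)}{\mathrm{Ai}(a_1+x)}\qquad\text{and}\qquad \Psi(x)=\frac{\mathrm{Ai}'(a_1+x)}{\mathrm{Ai}(a_1+x)} \] are infinitely differentiable and monotonically decreasing on $x>0$, and $\Phi(0)=1$ (i.e. $\lim_{x\to0^+}\Phi(x)=1$).
   Context: $\mathrm{Ai}$ is the Airy function, the solution of $\mathrm{Ai}''(x)=x\,\mathrm{Ai}(x)$ with $\mathrm{Ai}(x)\to0$ as $x\to+\infty$; its zeros are all real and negative, and $a_1\approx-2.338$ is its largest zero. *)

From Stdlib Require Import Reals.
From Coquelicot Require Import Coquelicot.
Open Scope R_scope.

(* This is the defining property of Ai given in the context; it determines Ai
   up to a (nonzero) multiplicative constant, and the statement below only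
   involves the scale-invariant ratio f'/f. *)
Definition is_Airy (f : R -> R) : Prop :=
  (forall x, ex_derive f x) /\
  (forall x, is_derive (Derive f) x (x * f x)) /\
  is_lim f p_infty 0.

Definition largest_zero (f : R -> R) (a : R) : Prop :=
  f a = 0 /\ forall x, a < x -> f x <> 0.

Definition Airy_Psi (f : R -> R) (a : R) (x : R) : R :=
  Derive f (a + x) / f (a + x).
Definition Airy_Phi (f : R -> R) (a : R) (x : R) : R :=
  x * Airy_Psi f a x.

From Stdlib Require Import Reals Lra.
From Coquelicot Require Import Coquelicot.
Open Scope R_scope.

(* With F x = Ai(a1 + x) and D = F', the energy E = D^2 - (a1 + x) F^2 has
   E' = -F^2 and Psi = D/F satisfies Psi' = -E/F^2 = a1 + x - Psi^2.  If E(x0) < 0,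
   Psi increases on [x0, oo), the Riccati equation then makes Psi positive, and
   (F^2)' = 2 Psi F^2 > 0 contradicts F -> 0; so E >= 0 and Psi decreases.  For
   Phi = x Psi, Phi' = H/F^2 with H = F D - x E, H(0) = 0 and H' = (2 a1 + 3 x) F^2,
   and the same escape argument gives H <= 0.  Near 0, Phi = D / (F/x) -> D(0)/D(0),
   where D(0) <> 0 because otherwise E(0) = 0 and E < 0 on x > 0.  Smoothness holds
   because the algebra generated by x, F, D and 1/F is closed under differentiation. *)

Lemma ex_derive_n_of_derive_closed (U : R -> Prop) (P : (R -> R) -> Prop) :
  open U ->
  (forall g, P g -> exists g', P g' /\ forall x, U x -> is_derive g x (g' x)) ->
  forall g n x, P g -> U x -> ex_derive_n g n x.
Proof.
  intros HU HP g n x Pg Ux.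
  assert (Derive_n_in_P : forall k, exists h, P h /\ forall y, U y -> Derive_n g k y = h y).
  { induction k as [|k [h [Ph Eh]]].
    - exists g; auto.
    - destruct (HP h Ph) as [h' [Ph' dh]].
      exists h'; split; [exact Ph'|].
      intros y Uy; simpl. rewrite (Derive_ext_loc _ h).
      + apply is_derive_unique, dh, Uy.
      + apply (filter_imp U); [exact Eh | exact (HU y Uy)]. }
  destruct n as [|n]; [exact I|].
  destruct (Derive_n_in_P n) as [h [Ph Eh]]. destruct (HP h Ph) as [h' [_ dh]].
  apply (ex_derive_ext_loc h).
  - apply (filter_imp U); [intros y Uy; symmetry; apply Eh, Uy | exact (HU x Ux)].
  - exists (h' x); apply dh, Ux.
Qed.

Lemma mean_value_le (g g' : R -> R) x y : x <= y ->
  (forall z, x <= z <= y -> is_derive g z (g' z)) ->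
  exists c, x <= c <= y /\ g y - g x = g' c * (y - x).
Proof.
  intros Hxy Hd.
  destruct (MVT_gen g x y g') as [c [Hc Heq]];
    rewrite ?Rmin_left, ?Rmax_right in * by lra.
  - intros z Hz; apply Hd; lra.
  - intros z Hz. apply continuity_pt_filterlim.
    apply (ex_derive_continuous (K := R_AbsRing) (V := R_NormedModule)).
    exists (g' z); apply Hd, Hz.
  - exists c; auto.
Qed.

Lemma nondecreasing_of_derive_nonneg (g g' : R -> R) x y : x <= y ->
  (forall z, x <= z <= y -> is_derive g z (g' z)) ->
  (forall z, x <= z <= y -> 0 <= g' z) -> g x <= g y.
Proof.
  intros Hxy Hd Hpos. destruct (mean_value_le g g' x y Hxy Hd) as [c [Hc Heq]].
  assert (0 <= g' c) by (apply Hpos, Hc). nra.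
Qed.

Lemma nonincreasing_of_derive_nonpos (g g' : R -> R) x y : x <= y ->
  (forall z, x <= z <= y -> is_derive g z (g' z)) ->
  (forall z, x <= z <= y -> g' z <= 0) -> g y <= g x.
Proof.
  intros Hxy Hd Hneg. destruct (mean_value_le g g' x y Hxy Hd) as [c [Hc Heq]].
  assert (g' c <= 0) by (apply Hneg, Hc). nra.
Qed.

Lemma is_lim_shift (f : R -> R) b l :
  is_lim f p_infty l -> is_lim (fun x => f (b + x)) p_infty l.
Proof.
  intro Hf.
  apply (filterlim_comp _ _ _ (fun x => b + x) f _ (Rbar_locally p_infty)); [|exact Hf].
  intros P [M HM]. exists (M - b). intros x Hx. apply HM. lra.
Qed.

Lemma is_lim_difference_quotient (f : R -> R) x l :
  is_derive f x l -> is_lim (fun h => (f (x + h) - f x) / h) 0 l.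
Proof.
  intro Hf. apply is_lim_spec. intro eps.
  destruct (proj1 (is_derive_Reals f x l) Hf eps (cond_pos eps)) as [delta Hdelta].
  exists delta. intros h Hh Hh0. change (Rabs (h - 0) < delta) in Hh.
  rewrite Rminus_0_r in Hh. apply Hdelta; assumption.
Qed.

Lemma is_lim_0_sqr_nondecreasing_eq0 (g : R -> R) x0 :
  is_lim g p_infty 0 -> (forall y, x0 <= y -> g x0 ^ 2 <= g y ^ 2) -> g x0 = 0.
Proof.
  intros Hg Hmono. destruct (Req_dec (g x0) 0) as [|Hnz]; [assumption|exfalso].
  destruct (proj2 (is_lim_spec g p_infty 0) Hg (mkposreal _ (Rabs_pos_lt _ Hnz)))
    as [M HM].
  set (y := Rmax M x0 + 1).
  assert (Hsmall : Rabs (g y) < Rabs (g x0)).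
  { rewrite <- (Rminus_0_r (g y)). apply HM. unfold y. pose proof (Rmax_l M x0). lra. }
  assert (Hbig : g x0 ^ 2 <= g y ^ 2).
  { apply Hmono. unfold y. pose proof (Rmax_r M x0). lra. }
  rewrite <- (pow2_abs (g x0)), <- (pow2_abs (g y)) in Hbig.
  pose proof (Rabs_pos (g y)). nra.
Qed.

Section ShiftedAiry.

Variables (a : R) (F D : R -> R).
Hypothesis F_derive : forall x, is_derive F x (D x).
Hypothesis D_derive : forall x, is_derive D x ((a + x) * F x).

Let ex_derive_F x : ex_derive F x. Proof. eexists; apply F_derive. Qed.
Let ex_derive_D x : ex_derive D x. Proof. eexists; apply D_derive. Qed.
Let Derive_F x : Derive F x = D x. Proof. apply is_derive_unique, F_derive. Qed.
Let Derive_D x : Derive D x = (a + x) * F x. Proof. apply is_derive_unique, D_derive. Qed.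

Local Ltac derive_FD := auto_derive; [repeat split; auto | rewrite ?Derive_F, ?Derive_D].

Definition Psi x := D x / F x.
Definition Phi x := x * Psi x.
Definition energy x := D x ^ 2 - (a + x) * F x ^ 2.
Definition Phi_numerator x := F x * D x - x * energy x.

Lemma is_derive_F_sqr x : is_derive (fun y => F y ^ 2) x (2 * (F x * D x)).
Proof. derive_FD. ring. Qed.

Lemma is_derive_energy x : is_derive energy x (- F x ^ 2).
Proof. unfold energy. derive_FD. ring. Qed.

Lemma energy_nonincreasing x y : x <= y -> energy y <= energy x.
Proof.
  intro Hxy. apply (nonincreasing_of_derive_nonpos _ (fun z => - F z ^ 2)); auto.
  - intros z _; apply is_derive_energy.
  - intros z _. pose proof (pow2_ge_0 (F z)). lra.
Qed.

Lemma is_derive_Psi x : F x <> 0 -> is_derive Psi x (- energy x / F x ^ 2).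
Proof. intro. unfold Psi. derive_FD. unfold energy. field. assumption. Qed.

Lemma Psi_riccati x : F x <> 0 -> - energy x / F x ^ 2 = a + x - Psi x ^ 2.
Proof. intro. unfold energy, Psi. field. assumption. Qed.

Lemma is_derive_Phi_numerator x :
  is_derive Phi_numerator x ((2 * a + 3 * x) * F x ^ 2).
Proof. unfold Phi_numerator, energy. derive_FD. ring. Qed.

Lemma is_derive_Phi x : F x <> 0 -> is_derive Phi x (Phi_numerator x / F x ^ 2).
Proof.
  intro. unfold Phi, Psi. derive_FD. unfold Phi_numerator, energy. field. assumption.
Qed.

Hypothesis F_nonzero : forall x, 0 < x -> F x <> 0.

Inductive airy_algebra : (R -> R) -> Prop :=
  | airy_algebra_id : airy_algebra (fun x => x)
  | airy_algebra_const c : airy_algebra (fun _ => c)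
  | airy_algebra_F : airy_algebra F
  | airy_algebra_D : airy_algebra D
  | airy_algebra_invF : airy_algebra (fun x => / F x)
  | airy_algebra_plus g h :
      airy_algebra g -> airy_algebra h -> airy_algebra (fun x => g x + h x)
  | airy_algebra_mult g h :
      airy_algebra g -> airy_algebra h -> airy_algebra (fun x => g x * h x).

Lemma airy_algebra_derive g : airy_algebra g ->
  exists g', airy_algebra g' /\ forall x, 0 < x -> is_derive g x (g' x).
Proof.
  induction 1 as [| c | | | | g h _ [g' [Hg' dg]] _ [h' [Hh' dh]]
                  | g h Hg [g' [Hg' dg]] Hh [h' [Hh' dh]]].
  - exists (fun _ => 1); split; [constructor|]. intros x _. auto_derive; auto.
  - exists (fun _ => 0); split; [constructor|]. intros x _. auto_derive; auto.
  - exists D; split; [constructor|]. intros x _; apply F_derive.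
  - exists (fun x => (a + x) * F x); split; [repeat constructor|].
    intros x _; apply D_derive.
  - exists (fun x => -1 * (D x * (/ F x * / F x))); split; [repeat constructor|].
    intros x Hx. specialize (F_nonzero x Hx). derive_FD. field. assumption.
  - exists (fun x => g' x + h' x); split; [constructor; assumption|].
    intros x Hx. apply is_derive_Reals, derivable_pt_lim_plus; apply is_derive_Reals; auto.
  - exists (fun x => g' x * h x + g x * h' x).
    split; [apply airy_algebra_plus; apply airy_algebra_mult; assumption|].
    intros x Hx. apply is_derive_Reals, derivable_pt_lim_mult; apply is_derive_Reals; auto.
Qed.

Lemma airy_algebra_smooth g n x : airy_algebra g -> 0 < x -> ex_derive_n g n x.
Proof.
  apply ex_derive_n_of_derive_closed; [apply open_gt | apply airy_algebra_derive].
Qed.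

Lemma Psi_smooth n x : 0 < x -> ex_derive_n Psi n x.
Proof.
  apply airy_algebra_smooth. unfold Psi, Rdiv. repeat constructor.
Qed.

Lemma Phi_smooth n x : 0 < x -> ex_derive_n Phi n x.
Proof.
  apply airy_algebra_smooth. unfold Phi, Psi, Rdiv. repeat constructor.
Qed.

Hypothesis F_lim : is_lim F p_infty 0.

Lemma F_eq0_of_FD_nonneg x0 : (forall y, x0 <= y -> 0 <= F y * D y) -> F x0 = 0.
Proof.
  intro HFD. apply is_lim_0_sqr_nondecreasing_eq0; [exact F_lim|].
  intros y Hy.
  apply (nondecreasing_of_derive_nonneg (fun z => F z ^ 2) (fun z => 2 * (F z * D z)));
    [assumption | intros z _; apply is_derive_F_sqr |].
  intros z Hz. specialize (HFD z ltac:(lra)). lra.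
Qed.

Lemma Psi_eventually_positive x0 : 0 < x0 ->
  (forall x y, x0 <= x -> x <= y -> Psi x <= Psi y) ->
  exists x1, x0 <= x1 /\ 0 < Psi x1.
Proof.
  intros Hx0 Psi_mono. set (C := Psi x0).
  destruct (Rlt_le_dec 0 C) as [HC|HC]; [exists x0; split; [lra | exact HC]|].
  set (T := Rmax x0 (1 - a + C ^ 2)).
  assert (HT : x0 <= T /\ 1 - a + C ^ 2 <= T) by (split; [apply Rmax_l | apply Rmax_r]).
  exists (T + (1 - C)). split; [lra|].
  destruct (Rlt_le_dec 0 (Psi (T + (1 - C)))) as [|Hend]; [assumption|exfalso].
  (* if Psi stays in [C, 0], the Riccati slope a + x - Psi^2 is at least 1 beyond T *)
  destruct (mean_value_le Psi (fun z => a + z - Psi z ^ 2) T (T + (1 - C)))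
    as [c [Hc Heq]]; [lra | |].
  { intros z Hz. rewrite <- Psi_riccati by (apply F_nonzero; lra).
    apply is_derive_Psi, F_nonzero; lra. }
  assert (C <= Psi c) by (apply Psi_mono; lra).
  assert (Psi c <= Psi (T + (1 - C))) by (apply Psi_mono; lra).
  assert (C <= Psi T) by (apply Psi_mono; lra).
  assert (1 <= a + c - Psi c ^ 2) by nra.
  nra.
Qed.

Lemma energy_nonneg x0 : 0 < x0 -> 0 <= energy x0.
Proof.
  intros Hx0. destruct (Rle_lt_dec 0 (energy x0)) as [|Hneg]; [assumption|exfalso].
  assert (Psi_mono : forall x y, x0 <= x -> x <= y -> Psi x <= Psi y).
  { intros x y Hx Hxy.
    apply (nondecreasing_of_derive_nonneg _ (fun z => - energy z / F z ^ 2)); [assumption| |].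
    - intros z Hz; apply is_derive_Psi, F_nonzero; lra.
    - intros z Hz. assert (energy z <= energy x0) by (apply energy_nonincreasing; lra).
      apply Rdiv_le_0_compat; [lra | apply pow2_gt_0, F_nonzero; lra]. }
  destruct (Psi_eventually_positive x0 Hx0 Psi_mono) as [x1 [Hx1 Hpos]].
  apply (F_nonzero x1); [lra|]. apply F_eq0_of_FD_nonneg. intros y Hy.
  assert (Psi x1 <= Psi y) by (apply Psi_mono; lra).
  replace (F y * D y) with (Psi y * F y ^ 2) by (unfold Psi; field; apply F_nonzero; lra).
  apply Rmult_le_pos; [lra | apply pow2_ge_0].
Qed.

Lemma Psi_nonincreasing x y : 0 < x -> x <= y -> Psi y <= Psi x.
Proof.
  intros Hx Hxy.
  apply (nonincreasing_of_derive_nonpos _ (fun z => - energy z / F z ^ 2)); [assumption| |].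
  - intros z Hz; apply is_derive_Psi, F_nonzero; lra.
  - intros z Hz.
    assert (0 <= energy z / F z ^ 2).
    { apply Rdiv_le_0_compat; [apply energy_nonneg; lra | apply pow2_gt_0, F_nonzero; lra]. }
    lra.
Qed.

Hypothesis F_0 : F 0 = 0.

Lemma D_0_neq0 : D 0 <> 0.
Proof.
  intro HD0.
  assert (energy_0 : energy 0 = 0) by (unfold energy; rewrite F_0, HD0; ring).
  assert (energy (/ 2) <= 0) by (rewrite <- energy_0; apply energy_nonincreasing; lra).
  assert (0 <= energy 1) by (apply energy_nonneg; lra).
  destruct (mean_value_le energy (fun z => - F z ^ 2) (/ 2) 1) as [c [Hc Heq]];
    [lra | intros; apply is_derive_energy |].
  pose proof (pow2_gt_0 (F c) (F_nonzero c ltac:(lra))). lra.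
Qed.

Lemma Phi_numerator_nonpos x1 : 0 < x1 -> Phi_numerator x1 <= 0.
Proof.
  intros Hx1. destruct (Rle_lt_dec (Phi_numerator x1) 0) as [|Hpos]; [assumption|exfalso].
  destruct (Rle_lt_dec 0 (2 * a + 3 * x1)) as [Hslope|Hslope].
  - apply (F_nonzero x1 Hx1), F_eq0_of_FD_nonneg. intros y Hy.
    assert (Phi_numerator x1 <= Phi_numerator y).
    { apply (nondecreasing_of_derive_nonneg _ (fun z => (2 * a + 3 * z) * F z ^ 2));
        [assumption | intros z _; apply is_derive_Phi_numerator |].
      intros z Hz. apply Rmult_le_pos; [lra | apply pow2_ge_0]. }
    assert (0 <= energy y) by (apply energy_nonneg; lra).
    unfold Phi_numerator in *. nra.
  - assert (Phi_numerator x1 <= Phi_numerator 0).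
    { apply (nonincreasing_of_derive_nonpos _ (fun z => (2 * a + 3 * z) * F z ^ 2));
        [lra | intros z _; apply is_derive_Phi_numerator |].
      intros z Hz. pose proof (pow2_ge_0 (F z)). nra. }
    assert (Phi_numerator 0 = 0) by (unfold Phi_numerator; rewrite F_0; ring).
    lra.
Qed.

Lemma Phi_nonincreasing x y : 0 < x -> x <= y -> Phi y <= Phi x.
Proof.
  intros Hx Hxy.
  apply (nonincreasing_of_derive_nonpos _ (fun z => Phi_numerator z / F z ^ 2));
    [assumption| |].
  - intros z Hz; apply is_derive_Phi, F_nonzero; lra.
  - intros z Hz. unfold Rdiv. apply Rmult_le_0_r; [apply Phi_numerator_nonpos; lra|].
    left; apply Rinv_0_lt_compat, pow2_gt_0, F_nonzero; lra.
Qed.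

Lemma Phi_lim : filterlim Phi (at_right 0) (locally 1).
Proof.
  assert (quotient_lim : is_lim (fun h => F h / h) 0 (D 0)).
  { apply (is_lim_ext (fun h => (F (0 + h) - F 0) / h)).
    - intro h. rewrite F_0, Rplus_0_l, Rminus_0_r. reflexivity.
    - apply is_lim_difference_quotient, F_derive. }
  assert (D_lim : is_lim D 0 (D 0)).
  { apply is_lim_continuity, continuity_pt_filterlim.
    apply (ex_derive_continuous (K := R_AbsRing) (V := R_NormedModule)), ex_derive_D. }
  assert (ratio_lim := is_lim_div _ _ _ _ _ D_lim quotient_lim).
  simpl in ratio_lim. rewrite Rinv_r in ratio_lim by exact D_0_neq0.
  (* Phi(y) = D(y) / (F(y)/y) only for y > 0, hence the passage through at_right *)
  apply (filterlim_ext_loc (fun y => D y / (F y / y))).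
  - exists (mkposreal _ Rlt_0_1). intros y _ Hy. unfold Phi, Psi.
    field. split; [apply F_nonzero, Hy | lra].
  - apply (filterlim_filter_le_1 (F := locally' 0)).
    + intros P [d Hd]. exists d. intros y Hy Hy0. apply Hd; [exact Hy | lra].
    + apply ratio_lim; [intro E; injection E; exact D_0_neq0 | exact I].
Qed.

End ShiftedAiry.

Theorem lemma4p1 (Ai : R -> R) (a1 : R)
  (HAi : is_Airy Ai) (Ha1 : largest_zero Ai a1) :
  (forall (n : nat) (x : R), 0 < x -> ex_derive_n (Airy_Phi Ai a1) n x) /\
  (forall (n : nat) (x : R), 0 < x -> ex_derive_n (Airy_Psi Ai a1) n x) /\
  (forall x y : R, 0 < x -> x <= y -> Airy_Phi Ai a1 y <= Airy_Phi Ai a1 x) /\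
  (forall x y : R, 0 < x -> x <= y -> Airy_Psi Ai a1 y <= Airy_Psi Ai a1 x) /\
  filterlim (Airy_Phi Ai a1) (at_right 0) (locally 1).
Proof.
  destruct HAi as [Ai_ex [Ai_D Ai_lim]]. destruct Ha1 as [Ai_a1 Ai_nonzero].
  set (F := fun x => Ai (a1 + x)). set (D := fun x => Derive Ai (a1 + x)).
  assert (F_derive : forall x, is_derive F x (D x)).
  { intro x. unfold F, D. auto_derive; [apply Ai_ex | apply Rmult_1_l]. }
  assert (D_derive : forall x, is_derive D x ((a1 + x) * F x)).
  { intro x. unfold F, D.
    auto_derive; [eexists; apply Ai_D | rewrite Rmult_1_l; apply is_derive_unique, Ai_D]. }
  assert (F_nonzero : forall x, 0 < x -> F x <> 0) by (intros; apply Ai_nonzero; lra).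
  assert (F_0 : F 0 = 0) by (unfold F; rewrite Rplus_0_r; exact Ai_a1).
  change (Airy_Phi Ai a1) with (Phi F D). change (Airy_Psi Ai a1) with (Psi F D).
  assert (F_lim : is_lim F p_infty 0) by exact (is_lim_shift Ai a1 0 Ai_lim).
  repeat split.
  - apply (Phi_smooth a1); assumption.
  - apply (Psi_smooth a1); assumption.
  - apply (Phi_nonincreasing a1); assumption.
  - apply (Psi_nonincreasing a1); assumption.
  - apply (Phi_lim a1); assumption.
Qed.
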